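(* Let $P \subset \mathbb{R}^2$ be a finite point set satisfying the standing condition, let $\varepsilon \in (0,1)$, let $X = \{t_1,\dots,t_m\}$ be the set of extreme points of $P$ indexed in counterclockwise order of their polar angles (indices taken cyclically, so $t_{m+1} = t_1$), and for each $i \in \{1,\dots,m\}$ let $x^*_i \in \mathbb{S}^1$ be the unit vector with $\langle t_i, x\rangle = \langle t_{i+1}, x\rangle$ and $\langle t_i, x\rangle > 0$. Define $$S = X \cup \{ p \in P \setminus X : \exists\, i \in \{1,\dots,m\} \text{ with } \langle p, x^*_i\rangle \geq (1-\varepsilon)\langle t_i, x^*_i\rangle \}.$$ Then for every $p \in P$: $p \in S$ if and only if $R_\varepsilon(p) \neq \varnothing$.
   Context: For a finite $Q \subset \mathbb{R}^2$ and unit vector $x$, $\omega(x,Q) = \max_{p \in Q}\langle p,x\rangle$. Standing condition: $\omega(x,P) > 0$ for all $x \in \mathbb{S}^1$ (the origin is interior to the convex hull of $P$). The Voronoi cell of $p \in P$ is $R(p) = \{x \in \mathbb{R}^2 \setminus \{0\} : \langle p,x\rangle \geq \omega(x,P)\}$; $p$ is an extreme point iff $R(p) \neq \varnothing$ (the extreme points are exactly the vertices of the convex hull of $P$). The $\varepsilon$-approximate Voronoi cell of $p$ is $R_\varepsilon(p) = \{x \in \mathbb{R}^2 \setminus \{0\} : \langle p,x\rangle \geq (1-\varepsilon)\,\omega(x,P)\}$. *)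

From Stdlib Require Import Reals Lra List.
Open Scope R_scope.

Definition pt := (R * R)%type.

Definition dot (p x : pt) : R := fst p * fst x + snd p * snd x.

Definition norm2 (p : pt) : R := sqrt (fst p * fst p + snd p * snd p).

Definition unit_vec (x : pt) : Prop := norm2 x = 1.

(* omega(x, Q) = max_{p in Q} <p, x>  (Q a nonempty finite list; 0 for the empty list) *)
Definition omega (x : pt) (Q : list pt) : R :=
  match Q with
  | nil => 0
  | q :: qs => fold_right (fun p acc => Rmax (dot p x) acc) (dot q x) qs
  end.

Definition standing (P : list pt) : Prop :=
  forall x : pt, unit_vec x -> 0 < omega x P.

Definition voronoi_cell (P : list pt) (p : pt) (x : pt) : Prop :=
  x <> (0, 0) /\ dot p x >= omega x P.

Definition approx_voronoi_cell (P : list pt) (eps : R) (p : pt) (x : pt) : Prop :=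
  x <> (0, 0) /\ dot p x >= (1 - eps) * omega x P.

Definition extreme (P : list pt) (p : pt) : Prop :=
  In p P /\ exists x, voronoi_cell P p x.

Definition polar_angle (p : pt) (th : R) : Prop :=
  0 <= th < 2 * PI /\ fst p = norm2 p * cos th /\ snd p = norm2 p * sin th.

Definition ccw_indexed (t : list pt) : Prop :=
  exists th : nat -> R,
    (forall i, (i < length t)%nat -> polar_angle (nth i t (0, 0)) (th i)) /\
    (forall i j, (i < j)%nat -> (j < length t)%nat -> th i < th j).

(* t_i with indices taken cyclically (0-based) *)
Definition tcyc (t : list pt) (i : nat) : pt := nth (i mod length t) t (0, 0).

Definition in_S (P : list pt) (eps : R) (t : list pt) (xs : nat -> pt) (p : pt) : Prop :=
  In p t \/
  (In p P /\ ~ In p t /\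
   exists i, (i < length t)%nat /\ dot p (xs i) >= (1 - eps) * dot (tcyc t i) (xs i)).

From Stdlib Require Import Reals Lra Lia List Classical.
Open Scope R_scope.

(* The vertices, ordered by angle, cut the plane into the cones spanned by
   t_i and t_(i+1).  Consecutive vertices are less than pi apart (otherwise
   some direction would see every vertex, hence all of P, on its nonpositive
   side, against the standing condition), and no vertex lies strictly inside
   a cone.  Together with extremality this makes x*_i an outer normal of the
   hull edge [t_i, t_(i+1)]: omega(x*_i, P) = <t_i, x*_i>, which gives the
   easy direction.  Conversely, with D = t_k x t_(k+1) > 0, a point
   p = (mu t_k + nu t_(k+1)) / D of the cone C_k satisfies
   <p, y> <= (mu + nu) / D * omega(y, P) for every y, with equality at
   y = x*_k; so an approximate Voronoi witness y for p forces
   (mu + nu) / D >= 1 - eps, which is the defining inequality of S at k. *)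

Definition cross (a b : pt) : R := fst a * snd b - snd a * fst b.

Lemma cross_anti (a b : pt) : cross a b = - cross b a.
Proof. unfold cross; ring. Qed.

(* Cramer's rule [cross u v * w = cross w v * u + cross u w * v], paired with x. *)
Lemma cross_mul_dot (u v w x : pt) :
  cross u v * dot w x = cross w v * dot u x + cross u w * dot v x.
Proof. unfold cross, dot; ring. Qed.

Lemma dot_neq0 (a x : pt) : 0 < dot a x -> x <> (0, 0) /\ a <> (0, 0).
Proof. intros Hd; split; intros ->; unfold dot in Hd; simpl in Hd; lra. Qed.

Lemma sum_sq_pos (y : pt) : y <> (0, 0) -> 0 < fst y * fst y + snd y * snd y.
Proof.
  destruct y as [a b]; simpl; intros Hy.
  destruct (Rlt_le_dec 0 (a * a + b * b)) as [h|h]; [exact h|].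
  exfalso; apply Hy; f_equal; nra.
Qed.

Lemma norm2_pos (y : pt) : y <> (0, 0) -> 0 < norm2 y.
Proof. intros Hy; apply sqrt_lt_R0, sum_sq_pos, Hy. Qed.

Lemma omega_ge (P : list pt) (q x : pt) : In q P -> dot q x <= omega x P.
Proof.
  destruct P as [|q0 qs]; [intros []|]; simpl omega.
  induction qs as [|a qs IH]; simpl; intros [<-|Hq].
  - lra.
  - destruct Hq.
  - eapply Rle_trans; [apply IH; left; reflexivity|apply Rmax_r].
  - destruct Hq as [<-|Hq]; [apply Rmax_l|].
    eapply Rle_trans; [apply IH; right; exact Hq|apply Rmax_r].
Qed.

Lemma omega_attained (P : list pt) (x : pt) :
  P <> nil -> exists q, In q P /\ omega x P = dot q x.
Proof.
  destruct P as [|q0 qs]; [intros H; contradiction|]; intros _; simpl omega.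
  induction qs as [|a qs [q [Hq Heq]]]; simpl.
  - exists q0; split; [left|]; reflexivity.
  - unfold Rmax; destruct (Rle_dec (dot a x) _).
    + exists q; split; [|exact Heq].
      destruct Hq as [<-|Hq]; [left|right; right]; auto.
    + exists a; split; [right; left|]; reflexivity.
Qed.

Lemma cross_dot_le_omega (P : list pt) (u v w y : pt) :
  In u P -> In v P -> 0 <= cross w v -> 0 <= cross u w ->
  cross u v * dot w y <= (cross w v + cross u w) * omega y P.
Proof.
  intros Hu Hv Hwv Huw; rewrite cross_mul_dot.
  pose proof (omega_ge P u y Hu); pose proof (omega_ge P v y Hv); nra.
Qed.

Definition at_angle (p : pt) (a : R) : Prop :=
  fst p = norm2 p * cos a /\ snd p = norm2 p * sin a.

Lemma cross_at_angle (p q : pt) (a b : R) :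
  at_angle p a -> at_angle q b -> cross p q = norm2 p * norm2 q * sin (b - a).
Proof.
  intros [Hp1 Hp2] [Hq1 Hq2]; unfold cross.
  rewrite Hp1, Hp2, Hq1, Hq2, sin_minus; ring.
Qed.

Lemma dot_at_angle (p : pt) (a g : R) :
  at_angle p a -> dot p (cos g, sin g) = norm2 p * cos (a - g).
Proof. intros [Hp1 Hp2]; unfold dot; simpl; rewrite Hp1, Hp2, cos_minus; ring. Qed.

Lemma cos_nonpos (u : R) :
  (PI / 2 <= u <= 3 * (PI / 2)) \/ (- (3 * (PI / 2)) <= u <= - (PI / 2)) -> cos u <= 0.
Proof.
  intros [[h1 h2]|[h1 h2]]; [apply cos_le_0; lra|].
  rewrite <- (Ropp_involutive u), cos_neg; apply cos_le_0; lra.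
Qed.

Lemma sin_pos_cases (u : R) :
  0 < sin u -> - (2 * PI) <= u <= 2 * PI -> (0 < u < PI) \/ (- (2 * PI) < u < - PI).
Proof.
  intros Hs Hu; pose proof PI_RGT_0.
  destruct (Rle_lt_dec PI u); [pose proof (sin_le_0 u ltac:(lra) ltac:(lra)); lra|].
  destruct (Rle_lt_dec u 0); [|left; lra].
  destruct (Rle_lt_dec (- PI) u).
  - pose proof (sin_ge_0 (- u) ltac:(lra) ltac:(lra)); rewrite sin_neg in *; lra.
  - destruct (Rle_lt_dec u (- (2 * PI))); [|right; lra].
    replace u with (- (2 * PI)) in Hs by lra; rewrite sin_neg, sin_2PI in Hs; lra.
Qed.

Lemma periodic_sign_change (g : nat -> R) (m : nat) :
  (0 < m)%nat -> (forall n, g n = g (n mod m)) ->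
  (exists k, 0 <= g k) -> (exists l, g l <= 0) ->
  exists k, (k < m)%nat /\ 0 <= g k /\ g (S k) <= 0.
Proof.
  intros Hm Hper [k Hk] [l Hl]; apply NNPP; intro Hno.
  assert (Hstep : forall n, 0 <= g n -> 0 < g (S n)).
  { intros n Hn; destruct (Rle_lt_dec (g (S n)) 0) as [h|h]; [|exact h].
    exfalso; apply Hno; exists (n mod m); split; [apply Nat.mod_upper_bound; lia|].
    rewrite <- Hper; split; [exact Hn|].
    rewrite Hper, <- Nat.add_1_r, Nat.Div0.add_mod_idemp_l, Nat.add_1_r, <- Hper.
    exact h. }
  assert (Hfrom_k : forall j, 0 <= g (k + j)%nat).
  { induction j; [rewrite Nat.add_0_r; exact Hk|].
    rewrite Nat.add_succ_r; apply Rlt_le, Hstep, IHj. }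
  (* k + (l + (m-1)(k+1)) + 1 = l + (k+1) m is congruent to l *)
  pose proof (Hstep _ (Hfrom_k (l + (m - 1) * S k)%nat)) as Hc.
  replace (S (k + (l + (m - 1) * S k))) with (l + S k * m)%nat in Hc by nia.
  rewrite Hper, Nat.Div0.mod_add, <- Hper in Hc; lra.
Qed.

Lemma tcyc_lt (t : list pt) (i : nat) : (i < length t)%nat -> tcyc t i = nth i t (0, 0).
Proof. intros H; unfold tcyc; rewrite Nat.mod_small; auto. Qed.

Lemma tcyc_mod (t : list pt) (i : nat) : tcyc t i = tcyc t (i mod length t).
Proof. unfold tcyc; rewrite Nat.Div0.mod_mod; reflexivity. Qed.

Lemma tcyc_In (t : list pt) (i : nat) : (0 < length t)%nat -> In (tcyc t i) t.
Proof. intros H; apply nth_In, Nat.mod_upper_bound; lia. Qed.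

Lemma In_tcyc (t : list pt) (q : pt) :
  In q t -> exists k, (k < length t)%nat /\ tcyc t k = q.
Proof.
  intros Hq; destruct (In_nth t q (0, 0) Hq) as [k [Hk Hn]].
  exists k; split; [exact Hk|]; rewrite tcyc_lt; auto.
Qed.

Section ConvexPosition.

Variable P : list pt.
Hypothesis HS : standing P.

Lemma standing_nonnil : P <> nil.
Proof.
  intros ->; assert (Hu : unit_vec (1, 0)).
  { unfold unit_vec, norm2; simpl; replace (1 * 1 + 0 * 0) with 1 by ring; apply sqrt_1. }
  pose proof (HS _ Hu); simpl in *; lra.
Qed.

(* omega is positively homogeneous, and positive on the unit circle. *)
Lemma omega_pos (y : pt) : y <> (0, 0) -> 0 < omega y P.
Proof.
  intros Hy; pose proof (sum_sq_pos y Hy) as Hs.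
  pose proof (norm2_pos y Hy) as Hn.
  assert (Hnn : norm2 y * norm2 y = fst y * fst y + snd y * snd y)
    by (apply sqrt_sqrt; lra).
  set (n := norm2 y) in *.
  assert (Hu : unit_vec (fst y / n, snd y / n)).
  { unfold unit_vec, norm2; simpl.
    replace (fst y / n * (fst y / n) + snd y / n * (snd y / n))
      with ((fst y * fst y + snd y * snd y) / (n * n)) by (field; lra).
    rewrite <- Hnn, Rdiv_diag by nra; apply sqrt_1. }
  destruct (omega_attained P (fst y / n, snd y / n) standing_nonnil) as [q [Hq Heq]].
  pose proof (HS _ Hu); pose proof (omega_ge P q y Hq).
  assert (dot q y = n * dot q (fst y / n, snd y / n)) by (unfold dot; simpl; field; lra).
  nra.
Qed.

Lemma extreme_neq0 (w : pt) : extreme P w -> w <> (0, 0).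
Proof.
  intros [_ [y [Hy Hw]]]; pose proof (omega_pos y Hy).
  apply (dot_neq0 w y); lra.
Qed.

Lemma approx_cell_of_extreme (eps : R) (p : pt) :
  0 <= eps -> extreme P p -> exists x, approx_voronoi_cell P eps p x.
Proof.
  intros Heps [_ [y [Hy Hp]]]; pose proof (omega_pos y Hy).
  exists y; split; [exact Hy|nra].
Qed.

(* An extreme point does not lie strictly inside the triangle 0 u v. *)
Lemma extreme_cross_bound (u v w : pt) :
  In u P -> In v P -> extreme P w -> 0 <= cross w v -> 0 <= cross u w ->
  cross u v <= cross w v + cross u w.
Proof.
  intros Hu Hv [_ [y [Hy Hw]]] Hwv Huw.
  pose proof (omega_pos y Hy); pose proof (cross_dot_le_omega P u v w y Hu Hv Hwv Huw).
  nra.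
Qed.

Variable t : list pt.
Hypothesis Hext : forall q, In q t <-> extreme P q.

Lemma omega_attained_at_vertex (y : pt) :
  y <> (0, 0) -> exists q, In q t /\ omega y P = dot q y.
Proof.
  intros Hy; destruct (omega_attained P y standing_nonnil) as [q [Hq Heq]].
  exists q; split; [apply Hext; split; [exact Hq|exists y; split; [exact Hy|lra]]|exact Heq].
Qed.

Lemma exists_vertex_dot_pos (y : pt) : y <> (0, 0) -> exists q, In q t /\ 0 < dot q y.
Proof.
  intros Hy; destruct (omega_attained_at_vertex y Hy) as [q [Hq Heq]].
  exists q; split; [exact Hq|]; rewrite <- Heq; apply omega_pos, Hy.
Qed.

Lemma vertices_length_pos : (0 < length t)%nat.
Proof.
  destruct (exists_vertex_dot_pos (1, 0)) as [q [Hq _]]; [intros E; injection E; lra|].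
  destruct t; [destruct Hq|simpl; lia].
Qed.

Lemma exists_vertex_dot_nonneg (y : pt) : exists q, In q t /\ 0 <= dot q y.
Proof.
  destruct (classic (y = (0, 0))) as [->|Hy].
  - exists (tcyc t 0); split; [apply tcyc_In, vertices_length_pos|].
    unfold dot; simpl; lra.
  - destruct (exists_vertex_dot_pos y Hy) as [q [Hq Hd]]; exists q; split; [exact Hq|lra].
Qed.

Lemma cone_cover (v : pt) :
  exists k, (k < length t)%nat /\ 0 <= cross (tcyc t k) v /\ 0 <= cross v (tcyc t (S k)).
Proof.
  destruct (periodic_sign_change (fun n => cross (tcyc t n) v) (length t))
    as [k [Hk [H1 H2]]].
  - exact vertices_length_pos.
  - intros n; rewrite tcyc_mod at 1; reflexivity.
  - destruct (exists_vertex_dot_nonneg (snd v, - fst v)) as [q [Hq Hd]].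
    destruct (In_tcyc t q Hq) as [k [_ <-]]; exists k.
    unfold cross, dot in *; simpl in *; lra.
  - destruct (exists_vertex_dot_nonneg (- snd v, fst v)) as [q [Hq Hd]].
    destruct (In_tcyc t q Hq) as [k [_ <-]]; exists k.
    unfold cross, dot in *; simpl in *; lra.
  - exists k; split; [exact Hk|]; rewrite cross_anti in H2; split; lra.
Qed.

Lemma vertex_norm2_pos (i : nat) : 0 < norm2 (tcyc t i).
Proof. apply norm2_pos, extreme_neq0, Hext, tcyc_In, vertices_length_pos. Qed.

Variable th : nat -> R.
Hypothesis Hpol : forall k, (k < length t)%nat -> polar_angle (nth k t (0, 0)) (th k).
Hypothesis Hinc : forall i j, (i < j)%nat -> (j < length t)%nat -> th i < th j.

Definition next_angle (i : nat) : R :=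
  if (S i <? length t)%nat then th (S i) else th 0%nat + 2 * PI.

Lemma angle_range (i : nat) : (i < length t)%nat -> 0 <= th i < 2 * PI.
Proof. intros Hi; apply (Hpol i Hi). Qed.

Lemma angle_le (i j : nat) : (i <= j)%nat -> (j < length t)%nat -> th i <= th j.
Proof.
  intros Hij Hj; destruct (Nat.eq_dec i j) as [->|Hne]; [lra|].
  apply Rlt_le, Hinc; lia.
Qed.

Lemma tcyc_at_angle (i : nat) : (i < length t)%nat -> at_angle (tcyc t i) (th i).
Proof. intros Hi; rewrite tcyc_lt by exact Hi; apply (proj2 (Hpol i Hi)). Qed.

Lemma tcyc_succ_at_angle (i : nat) :
  (i < length t)%nat -> at_angle (tcyc t (S i)) (next_angle i).
Proof.
  intros Hi; unfold next_angle; destruct (Nat.ltb_spec (S i) (length t)) as [Hs|Hs].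
  - apply tcyc_at_angle, Hs.
  - unfold at_angle, tcyc; replace (S i) with (length t) by lia.
    rewrite Nat.Div0.mod_same, cos_plus, sin_plus, cos_2PI, sin_2PI, !Rmult_1_r, !Rmult_0_r,
      Rminus_0_r, Rplus_0_r.
    apply (proj2 (Hpol 0%nat vertices_length_pos)).
Qed.

Lemma next_angle_bounds (i : nat) :
  (i < length t)%nat -> th i < next_angle i <= th i + 2 * PI.
Proof.
  intros Hi; pose proof (angle_range i Hi); unfold next_angle.
  destruct (Nat.ltb_spec (S i) (length t)) as [Hs|Hs].
  - pose proof (Hinc i (S i) ltac:(lia) Hs); pose proof (angle_range _ Hs); lra.
  - pose proof (angle_le 0 i ltac:(lia) Hi); pose proof (angle_range 0 ltac:(lia)); lra.
Qed.

(* No vertex has an angle strictly between th i and next_angle i, modulo 2 pi. *)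
Lemma next_angle_gap (i j : nat) :
  (i < length t)%nat -> (j < length t)%nat ->
  (th j <= th i /\ next_angle i - 2 * PI <= th j) \/ next_angle i <= th j.
Proof.
  intros Hi Hj; pose proof (angle_range j Hj); unfold next_angle.
  destruct (Nat.ltb_spec (S i) (length t)) as [Hs|Hs].
  - pose proof (angle_range _ Hs).
    destruct (Nat.le_gt_cases j i); [left; split; [apply angle_le|]; auto; lra|].
    right; apply angle_le; auto.
  - left; split; [apply angle_le; auto; lia|].
    pose proof (angle_le 0 j ltac:(lia) Hj); lra.
Qed.

Lemma exists_vertex_cos_pos (g : R) : exists k, (k < length t)%nat /\ 0 < cos (th k - g).
Proof.
  destruct (exists_vertex_dot_pos (cos g, sin g)) as [q [Hq Hd]].
  - intros E; injection E as E1 E2; pose proof (sin2_cos2 g).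
    rewrite E1, E2 in H; unfold Rsqr in H; lra.
  - destruct (In_tcyc t q Hq) as [k [Hk <-]]; exists k; split; [exact Hk|].
    rewrite (dot_at_angle _ _ _ (tcyc_at_angle k Hk)) in Hd.
    pose proof (vertex_norm2_pos k); nra.
Qed.

Lemma cross_succ_pos (i : nat) :
  (i < length t)%nat -> 0 < cross (tcyc t i) (tcyc t (S i)).
Proof.
  intros Hi; pose proof PI_RGT_0; pose proof (next_angle_bounds i Hi).
  rewrite (cross_at_angle _ _ _ _ (tcyc_at_angle i Hi) (tcyc_succ_at_angle i Hi)).
  pose proof (vertex_norm2_pos i); pose proof (vertex_norm2_pos (S i)).
  apply Rmult_lt_0_compat; [apply Rmult_lt_0_compat; assumption|].
  destruct (Rlt_le_dec (next_angle i - th i) PI) as [Hlt|Hge]; [apply sin_gt_0; lra|].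
  (* otherwise all vertices lie in the closed half-plane opposite to the gap's bisector *)
  exfalso; destruct (exists_vertex_cos_pos ((th i + next_angle i) / 2)) as [k [Hk Hc]].
  pose proof (angle_range i Hi); pose proof (angle_range k Hk).
  assert (cos (th k - (th i + next_angle i) / 2) <= 0); [|lra].
  apply cos_nonpos; destruct (next_angle_gap i k Hi Hk); [right|left]; lra.
Qed.

Lemma no_vertex_strictly_between (i : nat) (q : pt) :
  (i < length t)%nat -> In q t ->
  ~ (0 < cross (tcyc t i) q /\ 0 < cross q (tcyc t (S i))).
Proof.
  intros Hi Hq [C1 C2]; destruct (In_tcyc t q Hq) as [j [Hj <-]].
  rewrite (cross_at_angle _ _ _ _ (tcyc_at_angle i Hi) (tcyc_at_angle j Hj)) in C1.
  rewrite (cross_at_angle _ _ _ _ (tcyc_at_angle j Hj) (tcyc_succ_at_angle i Hi)) in C2.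
  pose proof (vertex_norm2_pos i); pose proof (vertex_norm2_pos j);
    pose proof (vertex_norm2_pos (S i)).
  assert (S1 : 0 < sin (th j - th i)).
  { apply (Rmult_lt_reg_l (norm2 (tcyc t i) * norm2 (tcyc t j))); nra. }
  assert (S2 : 0 < sin (next_angle i - th j)).
  { apply (Rmult_lt_reg_l (norm2 (tcyc t j) * norm2 (tcyc t (S i)))); nra. }
  pose proof (angle_range i Hi); pose proof (angle_range j Hj);
    pose proof (next_angle_bounds i Hi); pose proof (next_angle_gap i j Hi Hj).
  apply sin_pos_cases in S1; [|lra]; apply sin_pos_cases in S2; [|lra]; lra.
Qed.

Lemma edge_normal_support (i : nat) (x : pt) :
  (i < length t)%nat -> dot (tcyc t i) x = dot (tcyc t (S i)) x -> 0 < dot (tcyc t i) x ->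
  omega x P = dot (tcyc t i) x.
Proof.
  intros Hi Heq Hc; pose proof (cross_succ_pos i Hi) as D.
  pose proof (no_vertex_strictly_between i) as N.
  assert (Ha : extreme P (tcyc t i)) by apply Hext, tcyc_In, vertices_length_pos.
  assert (Hb : extreme P (tcyc t (S i))) by apply Hext, tcyc_In, vertices_length_pos.
  set (a := tcyc t i) in *; set (b := tcyc t (S i)) in *.
  destruct (omega_attained_at_vertex x (proj1 (dot_neq0 a x Hc))) as [z [Hz Hzx]].
  pose proof (omega_ge P a x (proj1 Ha)).
  destruct (Rle_lt_dec (dot z x) (dot a x)) as [Hle|Hlt]; [lra|exfalso].
  assert (HzP : In z P) by apply Hext, Hz.
  destruct (Rle_lt_dec (cross a z) 0) as [Caz|Caz].
  - rewrite cross_anti in Caz.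
    pose proof (extreme_cross_bound z b a HzP (proj1 Hb) Ha ltac:(lra) ltac:(lra)).
    pose proof (cross_mul_dot z b a x); nra.
  - destruct (Rle_lt_dec (cross z b) 0) as [Czb|Czb]; [|exact (N z Hi Hz (conj Caz Czb))].
    rewrite cross_anti in Czb.
    pose proof (extreme_cross_bound a z b (proj1 Ha) HzP Hb ltac:(lra) ltac:(lra)).
    pose proof (cross_mul_dot a z b x); nra.
Qed.

Lemma approx_cell_cone_bound (eps : R) (p y : pt) :
  approx_voronoi_cell P eps p y ->
  exists k, (k < length t)%nat /\
    forall x, dot (tcyc t k) x = dot (tcyc t (S k)) x -> 0 <= dot (tcyc t k) x ->
      dot p x >= (1 - eps) * dot (tcyc t k) x.
Proof.
  intros [Hy Hp]; destruct (cone_cover p) as [k [Hk [Hap Hpb]]].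
  exists k; split; [exact Hk|]; intros x Heq Hc.
  pose proof (cross_succ_pos k Hk) as D; pose proof (omega_pos y Hy).
  assert (HaP : In (tcyc t k) P) by apply Hext, tcyc_In, vertices_length_pos.
  assert (HbP : In (tcyc t (S k)) P) by apply Hext, tcyc_In, vertices_length_pos.
  pose proof (cross_dot_le_omega P _ _ p y HaP HbP Hpb Hap).
  pose proof (cross_mul_dot (tcyc t k) (tcyc t (S k)) p x) as Hx; rewrite <- Heq in Hx.
  set (a := tcyc t k) in *; set (b := tcyc t (S k)) in *.
  assert (Hgauge : (1 - eps) * cross a b <= cross p b + cross a p) by nra.
  nra.
Qed.

End ConvexPosition.

Theorem lemma1 (P : list pt) (eps : R) (t : list pt) (xs : nat -> pt) :
  standing P ->
  0 < eps < 1 ->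
  NoDup t ->
  (forall q, In q t <-> extreme P q) ->
  ccw_indexed t ->
  (forall i, (i < length t)%nat ->
     unit_vec (xs i) /\
     dot (tcyc t i) (xs i) = dot (tcyc t (S i)) (xs i) /\
     0 < dot (tcyc t i) (xs i)) ->
  forall p, In p P ->
    (in_S P eps t xs p <-> exists x, approx_voronoi_cell P eps p x).
Proof.
  intros HS Heps _ Hext [th [Hpol Hinc]] Hxs p Hp; split.
  - intros [Ht|[_ [_ [i [Hi Hge]]]]]; [apply approx_cell_of_extreme, Hext; auto; lra|].
    destruct (Hxs i Hi) as [_ [Heq Hc]].
    exists (xs i); split; [exact (proj1 (dot_neq0 _ _ Hc))|].
    rewrite (edge_normal_support P HS t Hext th Hpol Hinc i (xs i) Hi Heq Hc); exact Hge.
  - intros [y Hy]; destruct (classic (In p t)) as [Ht|Hnt]; [left; exact Ht|].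
    destruct (approx_cell_cone_bound P HS t Hext th Hpol Hinc eps p y Hy) as [k [Hk Hbound]].
    destruct (Hxs k Hk) as [_ [Heq Hc]].
    right; split; [exact Hp|split; [exact Hnt|]].
    exists k; split; [exact Hk|apply Hbound; lra].
Qed.
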